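(* Let $F$ be a field of characteristic zero and $n,m$ natural numbers. The set of elements $l\in W(n,m)$ such that every standard basis element $b=e^{\alpha}x^{\beta}\partial_k$ of $W(n,m)$ is an eigenvector of $\mathrm{ad}\,l$ (i.e. $[b,l]\in Fb$ for all such $b$) is exactly the $m$-dimensional subspace spanned by $\{x_t\partial_t: n+1\le t\le n+m\}$; this is a maximal torus of $W(n,m)$ with respect to the standard basis.
   Context: Let $A_{n,m}$ be the commutative $F$-algebra with $F$-basis the symbols $e^{\alpha}x^{\beta}=e^{a_1x_1}\cdots e^{a_nx_n}x_1^{b_1}\cdots x_{n+m}^{b_{n+m}}$, $\alpha\in\mathbb Z^n$, $\beta\in\mathbb Z^{n+m}$, with multiplication $e^{\alpha}x^{\beta}\cdot e^{\gamma}x^{\delta}=e^{\alpha+\gamma}x^{\beta+\delta}$. For $1\le i\le n+m$, $\partial_i(e^{\alpha}x^{\beta})=a_i e^{\alpha}x^{\beta}+b_i e^{\alpha}x^{\beta-\epsilon_i}$, where $a_i:=0$ for $i>n$. $W(n,m)$ is the Lie algebra with standard basis $\{e^{\alpha}x^{\beta}\partial_i\}$ and bracket $[f\partial_i,g\partial_j]=f\partial_i(g)\partial_j-g\partial_j(f)\partial_i$. Here $x_t\partial_t$ denotes $x^{\epsilon_t}\partial_t$. *)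

From HB Require Import structures.
From mathcomp Require Import all_boot all_order all_algebra.
From mathcomp Require Import finmap.
Set Implicit Arguments. Unset Strict Implicit. Unset Printing Implicit Defensive.
Import Order.TTheory GRing.Theory Num.Theory.
Local Open Scope ring_scope.


(* Index of a standard basis element  e^alpha x^beta d_k  of W(n,m):
   (alpha, beta, k) with alpha in Z^n, beta in Z^(n+m), k in {0..n+m-1}. *)
Definition Widx (n m : nat) : Type :=
  ({ffun 'I_n -> int} * {ffun 'I_(n + m) -> int} * 'I_(n + m))%type.

Definition acoef (n m : nat) (alpha : {ffun 'I_n -> int}) (i : 'I_(n + m)) : int :=
  match split i with inl k => alpha k | inr _ => 0 end.

Definition eps (n m : nat) (i : 'I_(n + m)) : {ffun 'I_(n + m) -> int} :=
  [ffun j => ((j == i) : nat)%:Z].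

Definition ffadd (n : nat) (u v : {ffun 'I_n -> int}) : {ffun 'I_n -> int} :=
  [ffun j => u j + v j].
Definition ffsub (n : nat) (u v : {ffun 'I_n -> int}) : {ffun 'I_n -> int} :=
  [ffun j => u j - v j].

Definition bvec (F : pzRingType) (n m : nat) (p : Widx n m) : Widx n m -> F :=
  fun q => ((q == p) : nat)%:R.

(* Coordinates of [e^alpha x^beta d_i , e^gamma x^delta d_j] in the standard basis:
   f d_i(g) d_j - g d_j(f) d_i  with
   d_i(e^gamma x^delta) = c_i e^gamma x^delta + delta_i e^gamma x^(delta - eps_i). *)
Definition brb (F : pzRingType) (n m : nat) (p q : Widx n m) : Widx n m -> F :=
  let: (alpha, beta, i) := p in
  let: (gamma, delta, j) := q in
  let ag := [ffun k => alpha k + gamma k] in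
  let bd := ffadd beta delta in
  fun r =>
    (acoef gamma i)%:~R * bvec F (ag, bd, j) r
    + (delta i)%:~R * bvec F (ag, ffsub bd (eps i), j) r
    - (acoef alpha j)%:~R * bvec F (ag, bd, i) r
    - (beta j)%:~R * bvec F (ag, ffsub bd (eps j), i) r.

Notation W F n m := {fsfun Widx n m -> F with 0}.

(* coordinates of [b, l] for a basis element b and l in W(n,m) (bilinear extension) *)
Definition brl (F : pzRingType) (n m : nat) (b : Widx n m) (l : W F n m) : Widx n m -> F :=
  fun r => \sum_(q <- finsupp l) l q * brb F b q r.

Definition eigen_basis (F : pzRingType) (n m : nat) (b : Widx n m) (l : W F n m) : Prop :=
  exists c : F, forall r, brl b l r = c * bvec F b r.

Definition xd (n m : nat) (t : 'I_(n + m)) : Widx n m := ([ffun _ => 0], eps t, t).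

Definition torus_elt (F : pzRingType) (n m : nat) (c : 'I_m -> F) : Widx n m -> F :=
  fun r => \sum_(t < m) c t * bvec F (xd (rshift n t)) r.

From HB Require Import structures.
From mathcomp Require Import all_boot all_order all_algebra.
From mathcomp Require Import finmap zify.
Set Implicit Arguments. Unset Strict Implicit. Unset Printing Implicit Defensive.
Import Order.TTheory GRing.Theory Num.Theory.
Local Open Scope ring_scope.

(* Write l = \sum_q l_q q and read off the coordinates of [b, l] away from b, which
   must vanish.  Bracketing with D_k relates the coefficients of l at e^g x^d D_j and
   at e^g x^(d + eps_k) D_j through the integer factors g_k and d_k + 1.  When g_k <> 0
   the coefficients vanish for d_k beyond the finite support of l, hence by descent for
   all d_k, so l has no exponential part; for g = 0 the same relation kills every
   x^d D_j with d_k <> 0 except x_k D_k.  Bracketing with x_j D_j kills D_j, and with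
   e^(x_k) D_k (k <= n) kills x_k D_k.  Only the x_t D_t with t > n survive, and
   conversely [e^a x^b D_k, x_t D_t] = (delta_kt - b_t) e^a x^b D_k.  Characteristic
   zero makes the integer factors invertible. *)

Section IntVectors.
Variable N : nat.
Implicit Types u v w : {ffun 'I_N -> int}.

Lemma ffaddE u v i : ffadd u v i = u i + v i.
Proof. by rewrite ffunE. Qed.

Lemma ffsubE u v i : ffsub u v i = u i - v i.
Proof. by rewrite ffunE. Qed.

Lemma ffaddA u v w : ffadd u (ffadd v w) = ffadd (ffadd u v) w.
Proof. by apply/ffunP => i; rewrite !ffaddE addrA. Qed.

Lemma ffadd0 u : ffadd [ffun => 0] u = u.
Proof. by apply/ffunP => i; rewrite ffaddE ffunE add0r. Qed.

Lemma ffaddI u : injective (ffadd u).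
Proof.
by move=> v w /ffunP uvw; apply/ffunP => i; move: (uvw i); rewrite !ffaddE => /addrI.
Qed.

Lemma ffaddK u v : ffsub (ffadd u v) v = u.
Proof. by apply/ffunP => i; rewrite ffsubE ffaddE addrK. Qed.

Lemma ffsubK u v : ffadd (ffsub u v) v = u.
Proof. by apply/ffunP => i; rewrite ffaddE ffsubE subrK. Qed.

Lemma ffsub_eq u v w : (ffsub u v == w) = (u == ffadd w v).
Proof. by apply/eqP/eqP => [<-|->]; rewrite ?ffsubK ?ffaddK. Qed.

Lemma ffsub_eq0 u v : (ffsub u v == [ffun => 0]) = (u == v).
Proof. by rewrite ffsub_eq ffadd0. Qed.

Lemma ffun_neq0 u : u != [ffun => 0] -> exists i, u i != 0.
Proof.
move=> u_neq0; apply/existsP; apply: contraNT u_neq0; rewrite negb_exists => /forallP u0.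
by apply/eqP/ffunP => i; rewrite ffunE; apply/eqP/negbNE.
Qed.

End IntVectors.

Lemma epsE n m (k i : 'I_(n + m)) : eps k i = ((i == k) : nat)%:Z.
Proof. by rewrite ffunE. Qed.

Lemma sum_eps_mul (R : pzRingType) n m (k : 'I_(n + m)) (f : 'I_(n + m) -> R) :
  \sum_i ((eps k i)%:~R : R) * f i = f k.
Proof.
rewrite (bigD1 k) //= big1 => [|i ik]; first by rewrite epsE eqxx mul1r addr0.
by rewrite epsE (negbTE ik) mul0r.
Qed.

Lemma int_ind_down (P : int -> Prop) (B : int) :
  (forall z, B < z -> P z) -> (forall z, P (z + 1) -> P z) -> forall z, P z.
Proof.
move=> Pbig Pstep.
have Pbelow (k : nat) : P (B + 1 - k%:Z).
  elim: k => [|k IHk]; first by apply: Pbig; lia.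
  by apply: Pstep; have -> : B + 1 - k.+1%:Z + 1 = B + 1 - k%:Z by lia.
move=> z; have [Bz|zB] := ltP B z; first exact: Pbig.
have -> : z = B + 1 - (absz (B + 1 - z)%R)%:Z by rewrite gez0_abs; lia.
exact: Pbelow.
Qed.

Lemma intr_eq0_pchar0 (F : idomainType) (z : int) :
  [pchar F] =i pred0 -> (z%:~R == 0 :> F) = (z == 0).
Proof.
move/(pcharf0P F) => natr_eq0.
by case: z => k; rewrite ?NegzE ?mulrNz ?oppr_eq0 natr_eq0.
Qed.

Section Acoef.
Variables n m : nat.

Lemma acoef_lshift (a : {ffun 'I_n -> int}) i : @acoef n m a (lshift m i) = a i.
Proof. by rewrite /acoef (unsplitK (inl _ i)). Qed.

Lemma acoef_rshift (a : {ffun 'I_n -> int}) t : @acoef n m a (rshift n t) = 0.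
Proof. by rewrite /acoef (unsplitK (inr _ t)). Qed.

Lemma acoef0 (i : 'I_(n + m)) : @acoef n m [ffun _ => 0] i = 0.
Proof. by rewrite /acoef; case: split => // ?; rewrite ffunE. Qed.

Lemma acoef_delta i0 (i : 'I_(n + m)) :
  @acoef n m [ffun i => ((i == i0) : nat)%:Z] i = eps (lshift m i0) i.
Proof.
by rewrite epsE -(splitK i); case: split => j; rewrite ?acoef_lshift ?acoef_rshift ?ffunE
  ?(inj_eq (@lshift_inj _ _)) ?eq_rlshift.
Qed.

End Acoef.

Section Coordinates.
Variables (R : comPzRingType) (n m : nat).
Local Notation Idx := (Widx n m).
Local Notation I := ('I_(n + m)).
Local Notation exps := {ffun 'I_n -> int}.
Local Notation pows := {ffun 'I_(n + m) -> int}.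

Lemma bvecC (p q : Idx) : bvec R p q = bvec R q p.
Proof. by rewrite /bvec eq_sym. Qed.

Lemma sum_mul_bvec (s : seq Idx) (H : Idx -> R) p : uniq s ->
  \sum_(q <- s) H q * bvec R p q = (p \in s)%:R * H p.
Proof.
elim: s => [|q s IHs]; first by rewrite big_nil mul0r.
rewrite big_cons in_cons /= => /andP [q_notin_s s_uniq]; rewrite IHs // /bvec.
have [<-|_] := eqVneq q p; last by rewrite mulr0 add0r.
by rewrite (negbTE q_notin_s) mulr1 mul0r addr0 mul1r.
Qed.

Lemma finsupp_coord (l : W R n m) (c : R) p :
  \sum_(q <- finsupp l) l q * (c * bvec R p q) = c * l p.
Proof.
under eq_bigr do rewrite mulrCA.
rewrite -mulr_sumr sum_mul_bvec ?fset_uniq //.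
by case: finsuppP; rewrite ?mul0r ?mul1r.
Qed.

Lemma sum_bvec_diag (c : I -> R) (g : exps) (f : I -> pows) (q : Idx) :
  \sum_i c i * bvec R (g, f i, i) q = ((q.1.1 == g) && (q.1.2 == f q.2))%:R * c q.2.
Proof.
case: q => [[g' d'] j'] /=; rewrite (bigD1 j') //= big1 => [|i ne].
  by rewrite addr0 /bvec !xpair_eqE eqxx andbT mulrC.
by rewrite /bvec !xpair_eqE (eq_sym j') (negbTE ne) andbF mulr0.
Qed.

Lemma brb_coord (a : exps) (b : pows) k (g : exps) (d : pows) j (q : Idx) :
  brb R (a, b, k) q (ffadd a g, ffadd b d, j) =
    (acoef g k)%:~R * bvec R (g, d, j) q
    + (d k + 1)%:~R * bvec R (g, ffadd d (eps k), j) q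
    - (j == k)%:R * \sum_i (acoef a i)%:~R * bvec R (g, d, i) q
    - (j == k)%:R * \sum_i (b i)%:~R * bvec R (g, ffadd d (eps i), i) q.
Proof.
case: q => [[g' d'] j']; rewrite !sum_bvec_diag /=.
rewrite /brb -[[ffun i => a i + g' i]]/(ffadd a g') ![bvec _ _ (ffadd a g, _, _)]bvecC.
rewrite /bvec !xpair_eqE !(inj_eq (@ffaddI _ _)) !ffsub_eq -!ffaddA !(inj_eq (@ffaddI _ _)).
have [->|_] := eqVneq g' g; last by rewrite !(mulr0, mul0r, subr0, addr0).
rewrite /= (eq_sym j') (eq_sym k); congr (_ + _ - _ - _).
- have [->|_] := eqVneq d' (ffadd d (eps k)); last by rewrite !mulr0.
  by rewrite ffaddE epsE eqxx.
- by case: (d' == d); case: (j == k); rewrite /= ?(mulr0, mul0r, mulr1, mul1r).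
- by case: (d' == _); case: (j == k); rewrite /= ?(mulr0, mul0r, mulr1, mul1r).
Qed.

Lemma finsupp_sum_bvec_diag (l : W R n m) e (c : I -> R) (g : exps) (f : I -> pows) :
  \sum_(q <- finsupp l) l q * (e * \sum_i c i * bvec R (g, f i, i) q)
  = e * \sum_i c i * l (g, f i, i).
Proof.
under eq_bigr do rewrite mulrCA mulr_sumr.
rewrite -mulr_sumr exchange_big /=; congr (_ * _).
by apply: eq_bigr => i _; rewrite finsupp_coord.
Qed.

Lemma brl_coord (l : W R n m) (a : exps) (b : pows) k (g : exps) (d : pows) j :
  brl (a, b, k) l (ffadd a g, ffadd b d, j) =
    (acoef g k)%:~R * l (g, d, j) + (d k + 1)%:~R * l (g, ffadd d (eps k), j)
    - (j == k)%:R * \sum_i (acoef a i)%:~R * l (g, d, i)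
    - (j == k)%:R * \sum_i (b i)%:~R * l (g, ffadd d (eps i), i).
Proof.
rewrite /brl; under eq_bigr do rewrite brb_coord !mulrBr mulrDr.
by rewrite !sumrB big_split /= !finsupp_coord !finsupp_sum_bvec_diag.
Qed.

End Coordinates.

Section Torus.
Variables (R : comPzRingType) (n m : nat).
Local Notation Idx := (Widx n m).
Local Notation exps := {ffun 'I_n -> int}.
Local Notation pows := {ffun 'I_(n + m) -> int}.

Lemma torus_elt_coord (c : 'I_m -> R) (g : exps) (d : pows) (j : 'I_(n + m)) :
  torus_elt c (g, d, j) =
    if (g == [ffun => 0]) && (d == eps j) then
      (if split j is inr t then c t else 0)
    else 0.
Proof.
rewrite /torus_elt /bvec /xd -(splitK j).
case: (split j) => [i|t]; rewrite unsplitK /=.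
  by rewrite if_same big1 // => t _; rewrite !xpair_eqE eq_lrshift andbF mulr0.
rewrite (bigD1 t) //= big1 => [|t' t't]; last first.
  by rewrite !xpair_eqE (inj_eq (@rshift_inj _ _)) [t == t']eq_sym (negbTE t't) andbF mulr0.
by rewrite addr0 !xpair_eqE eqxx andbT; case: ifP; rewrite ?mulr1 ?mulr0.
Qed.

Lemma torus_elt_xd (c : 'I_m -> R) t : torus_elt c (xd (rshift n t)) = c t.
Proof. by rewrite torus_elt_coord !eqxx (unsplitK (inr _ t)). Qed.

Lemma brb_xd (a : exps) (b : pows) k t r :
  brb R (a, b, k) (xd (rshift n t)) r =
    (((k == rshift n t) : nat)%:R - (b (rshift n t))%:~R) * bvec R (a, b, k) r.
Proof.
have a0 : [ffun i => a i + [ffun => 0] i] = a by apply/ffunP => i; rewrite !ffunE addr0.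
rewrite /brb /xd a0 ffaddK acoef0 acoef_rshift mul0r add0r mul0r subr0 mulrBl epsE.
by case: eqP => [->|_]; rewrite ?ffaddK ?mul0r.
Qed.

Lemma finsupp_torus_sum (l : W R n m) (c : 'I_m -> R) (G : Idx -> R) :
  (forall r, l r = torus_elt c r) ->
  \sum_(q <- finsupp l) l q * G q = \sum_t c t * G (xd (rshift n t)).
Proof.
move=> l_torus; under eq_bigr do rewrite l_torus /torus_elt mulr_suml.
rewrite exchange_big /=; apply: eq_bigr => t _.
under eq_bigr do rewrite mulrAC -mulrA.
rewrite -mulr_sumr sum_mul_bvec ?fset_uniq //.
have [_|xt_out] := boolP (xd (rshift n t) \in finsupp l); first by rewrite mul1r.
by rewrite -(torus_elt_xd c t) -l_torus fsfun_dflt // !mul0r.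
Qed.

Lemma torus_elt_eigen (l : W R n m) (c : 'I_m -> R) :
  (forall r, l r = torus_elt c r) -> forall b, eigen_basis b l.
Proof.
move=> l_torus [[a b] k].
exists (\sum_t c t * (((k == rshift n t) : nat)%:R - (b (rshift n t))%:~R)) => r.
rewrite /brl (finsupp_torus_sum _ l_torus) mulr_suml.
by apply: eq_bigr => t _; rewrite brb_xd mulrA.
Qed.

End Torus.

Lemma finsupp_pows_bounded (R : pzRingType) n m (l : W R n m) (k : 'I_(n + m)) :
  exists B : int, forall q : Widx n m, B < q.1.2 k -> l q = 0.
Proof.
exists (\max_(q <- finsupp l) `|q.1.2 k|%N)%:Z => q B_lt.
apply: fsfun_dflt; apply: contraTN B_lt => q_in; rewrite -leNgt.
apply: le_trans (ler_norm _) _; rewrite -abszE lez_nat.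
exact: (@leq_bigmax_seq _ _ xpredT (fun q : Widx n m => `|q.1.2 k|%N) _ q_in isT).
Qed.

Section EigenCoordinates.
Variables (F : fieldType) (n m : nat).
Hypothesis charF0 : [pchar F] =i pred0.
Variable l : W F n m.
Hypothesis l_eigen : forall b, eigen_basis b l.
Local Notation exps := {ffun 'I_n -> int}.
Local Notation pows := {ffun 'I_(n + m) -> int}.
Local Notation z0 := ([ffun => 0] : exps).
Local Notation zf := ([ffun => 0] : pows).

Lemma intr_neq0 (z : int) : z != 0 -> (z%:~R : F) != 0.
Proof. by rewrite intr_eq0_pchar0. Qed.

Lemma brl_eigen_off p r : r != p -> brl p l r = 0.
Proof. by move=> rp; case: (l_eigen p) => c ->; rewrite /bvec (negbTE rp) mulr0. Qed.

Lemma coord_const_vanish j : l (z0, zf, j) = 0.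
Proof.
pose d : pows := [ffun i => - eps j i].
have dj : d j + 1 = 0 by rewrite ffunE epsE eqxx addNr.
have d_eps : ffadd d (eps j) = zf by apply/ffunP => i; rewrite !ffunE addNr.
have := @brl_eigen_off (z0, eps j, j) (ffadd z0 z0, ffadd (eps j) d, j).
rewrite brl_coord acoef0 mul0r add0r eqxx !mul1r.
rewrite big1 => [|i _]; last by rewrite acoef0 mul0r.
rewrite subr0 sum_eps_mul dj d_eps mul0r sub0r => vanish.
apply: oppr_inj; rewrite oppr0; apply: vanish.
rewrite !xpair_eqE eqxx andbT; apply/negP => /andP [_ /eqP /ffunP /(_ j)].
by rewrite !ffunE eqxx.
Qed.

Lemma coord_monomial_vanish (d : pows) j k :
  d k != 0 -> (z0, d, j) != xd k -> l (z0, d, j) = 0.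
Proof.
move=> dk dj_xd.
have := @brl_eigen_off (z0, zf, k) (ffadd z0 z0, ffadd zf (ffsub d (eps k)), j).
rewrite brl_coord acoef0 mul0r add0r ffsubK ffsubE epsE eqxx subrK.
rewrite !big1 => [|i _|i _]; rewrite ?ffunE ?acoef0 ?mul0r ?mulr0 ?subr0 //.
move=> vanish; apply: (mulfI (intr_neq0 dk)); rewrite mulr0; apply: vanish.
rewrite !xpair_eqE; apply: contra dj_xd => /andP [/andP [_]].
by rewrite ffadd0 ffsub_eq0 => /eqP -> /eqP ->.
Qed.

Lemma coord_exp_vanish (g : exps) i0 (d : pows) j : g i0 != 0 -> l (g, d, j) = 0.
Proof.
move=> gi0; set k := lshift m i0.
have shift (d' : pows) :
    (g i0)%:~R * l (g, d', j) + (d' k + 1)%:~R * l (g, ffadd d' (eps k), j) = 0.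
  have := @brl_eigen_off (z0, zf, k) (ffadd z0 g, ffadd zf d', j).
  rewrite brl_coord acoef_lshift !big1 => [|i _|i _]; rewrite ?ffunE ?acoef0 ?mul0r //.
  rewrite !mulr0 !subr0; apply; rewrite !xpair_eqE ffadd0.
  by apply: contraNN gi0 => /andP [/andP [/eqP -> _] _]; rewrite ffunE.
have [B Bl] := finsupp_pows_bounded l k.
suff vanish z : forall d' : pows, d' k = z -> l (g, d', j) = 0 by exact: vanish.
move: z; apply: (int_ind_down (B := B)) => [z Bz d' d'k|z IH d' d'k].
  by apply: Bl; rewrite d'k.
apply: (mulfI (intr_neq0 gi0)); rewrite mulr0 -[RHS](shift d').
by rewrite (IH (ffadd d' (eps k))) ?mulr0 ?addr0 // ffaddE epsE eqxx d'k.
Qed.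

Lemma coord_xd_exp_vanish i0 : l (xd (lshift m i0)) = 0.
Proof.
set k := lshift m i0; pose a : exps := [ffun i => ((i == i0) : nat)%:Z].
have eps2_vanish : l (z0, ffadd (eps k) (eps k), k) = 0.
  apply: (coord_monomial_vanish (k := k)); first by rewrite ffaddE !epsE eqxx.
  rewrite !xpair_eqE !eqxx andbT /=; apply/eqP => /ffunP/(_ k).
  by rewrite ffaddE !epsE eqxx.
have := @brl_eigen_off (a, zf, k) (ffadd a z0, ffadd zf (eps k), k).
rewrite brl_coord acoef0 mul0r add0r eqxx !mul1r ffadd0 eps2_vanish mulr0 sub0r.
under eq_bigr do rewrite acoef_delta.
rewrite sum_eps_mul big1 => [|i _]; last by rewrite ffunE mul0r.
rewrite subr0 => vanish; apply: oppr_inj; rewrite oppr0; apply: vanish.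
rewrite !xpair_eqE eqxx andbT; apply/nandP; right; apply/eqP => /ffunP/(_ k).
by rewrite !ffunE eqxx.
Qed.

Lemma eigen_coord_torus r : l r = torus_elt (fun t => l (xd (rshift n t))) r.
Proof.
case: r => [[g d] j]; rewrite torus_elt_coord.
have [->|g_neq0] := eqVneq g z0; last first.
  have [i0 gi0] := ffun_neq0 g_neq0.
  by rewrite (coord_exp_vanish _ _ gi0).
have [->|d_neq] := eqVneq d (eps j).
  rewrite -(splitK j); case: (split j) => [i0|t]; rewrite unsplitK //=.
  exact: coord_xd_exp_vanish.
rewrite andbF.
have [->|/ffun_neq0 [k dk]] := eqVneq d zf; first exact: coord_const_vanish.
apply: (coord_monomial_vanish dk); rewrite /xd !xpair_eqE.
by apply: contra d_neq => /andP [/andP [_ /eqP ->] /eqP ->].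
Qed.

End EigenCoordinates.

Unset Implicit Arguments.
Set Strict Implicit.

Theorem proposition1 (F : fieldType) (n m : nat) (charF0 : [pchar F] =i pred0) :
  (forall l : W F n m,
     (forall b : Widx n m, eigen_basis b l) <->
     (exists c : 'I_m -> F, forall r, l r = @torus_elt F n m c r))
  /\ (forall c : 'I_m -> F, (forall r, @torus_elt F n m c r = 0) -> forall t, c t = 0).
Proof.
split=> [l|c c0 t]; last by rewrite -(torus_elt_xd n c t) c0.
split=> [l_eigen|[c l_torus]]; last exact: torus_elt_eigen l_torus.
by exists (fun t => l (xd (rshift n t))); apply: eigen_coord_torus.
Qed.
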